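(* Let $T$ be an almost reduced linear trellis with $C(T)=C$. If $T$ is mergeable, then by merging vertices of $T$ one obtains a linear trellis $T'$ with $C(T')=C$ that is smaller than $T$.
   Context: Let $\mathbb{F}$ be a finite field and $n\ge1$; indices are taken in $\mathbb{Z}_n$. A trellis $T$ of length $n$ over $\mathbb{F}$ consists of pairwise disjoint finite vertex sets $V_i(T)$, $i\in\mathbb{Z}_n$, and edge sets $E_i(T)\subseteq V_i(T)\times\mathbb{F}\times V_{i+1}(T)$; $(v,\alpha,w)\in E_i(T)$ is an edge from $v$ to $w$ with label $\alpha$. Trellises are trim (each vertex has an outgoing and an incoming edge). $T$ is linear if each $V_i(T)$ is an $\mathbb{F}$-vector space and each $E_i(T)$ a subspace of $V_i(T)\times\mathbb{F}\times V_{i+1}(T)$. A cycle is a closed path of length $n$ starting (and ending) at a vertex of $V_0(T)$; $C(T)\subseteq\mathbb{F}^n$ is the set of label sequences of cycles. $T$ is almost reduced if every vertex lies on some cycle. Merging two vertices $v\ne w$ of the same $V_i(T)$ means identifying them into one vertex (keeping all edges). $T$ is mergeable if there exist $i$ and $v\ne w\in V_i(T)$ such that the trellis obtained by merging $v$ and $w$ represents the same code as $T$. A trellis $T'$ of length $n$ is smaller than $T$ if $|V_i(T')|\le|V_i(T)|$ for all $i$ with at least one strict inequality. *)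

From HB Require Import structures.
From mathcomp Require Import all_boot all_order all_algebra.
Unset Strict Implicit. Unset Printing Implicit Defensive.
Import GRing.Theory.
Local Open Scope ring_scope.

(* Indices are taken in Z_n, represented by 'I_n with the cyclic successor
   ordS (i |-> i+1 mod n).  Vertex sets V_i are modelled as finite types
   (distinct types per index, so pairwise disjointness is automatic).     *)

Section Trellis.
Variables (F : finFieldType) (n : nat).

Record trellis := Trellis {
  vtx : 'I_n -> finType;
  edge : forall i : 'I_n, {set (vtx i * F * vtx (ordS i))%type}
}.

Definition tvtx (T : trellis) := {i : 'I_n & vtx T i}.

Definition trim (T : trellis) : Prop :=
  forall (i : 'I_n) (x : vtx T i),
    (exists e, e \in edge T i /\ e.1.1 = x) /\
    (exists (j : 'I_n) e, e \in edge T j /\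
        Tagged (vtx T) e.2 = Tagged (vtx T) x).

Definition is_cycle (T : trellis) (u : forall i : 'I_n, vtx T i)
    (c : 'rV[F]_n) : Prop :=
  forall i : 'I_n, (u i, c ord0 i, u (ordS i)) \in edge T i.

Definition code (T : trellis) (c : 'rV[F]_n) : Prop :=
  exists u, is_cycle T u c.

Definition same_code (T1 T2 : trellis) : Prop :=
  forall c, code T1 c <-> code T2 c.

Definition almost_reduced (T : trellis) : Prop :=
  forall (i : 'I_n) (x : vtx T i), exists u c, is_cycle T u c /\ u i = x.

Definition merge_eq (T : trellis) (p q x y : tvtx T) : Prop :=
  x = y \/ (x = p /\ y = q) \/ (x = q /\ y = p).

(* The code of the trellis obtained from T by merging the vertices p and q
   (of the same V_i): a cycle of the merged trellis is a sequence of edges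
   e_j \in E_j (each kept, with endpoints p,q replaced by the merged vertex)
   such that the head of e_j and the tail of e_{j+1} coincide after merging. *)
Definition merged_code (T : trellis) (p q : tvtx T) (c : 'rV[F]_n) : Prop :=
  exists e : forall j : 'I_n, (vtx T j * F * vtx T (ordS j))%type,
    forall j : 'I_n,
      [/\ e j \in edge T j, (e j).1.2 = c ord0 j &
          merge_eq T p q (Tagged (vtx T) (e j).2)
                       (Tagged (vtx T) (e (ordS j)).1.1)].

Definition mergeable (T : trellis) : Prop :=
  exists (i : 'I_n) (v w : vtx T i),
    v <> w /\ forall c, merged_code T (Tagged (vtx T) v) (Tagged (vtx T) w) c
                        <-> code T c.

Definition smaller (T1 T2 : trellis) : Prop :=
  (forall i : 'I_n, #|vtx T1 i| <= #|vtx T2 i|)%N /\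
  (exists i : 'I_n, #|vtx T1 i| < #|vtx T2 i|)%N.

(* Linear trellises: each V_i is an F-vector space, (WLOG, being finite)
   V_i = F^(d_i), and each E_i a subspace of V_i x F x V_{i+1}. *)
Record ltrellis := LTrellis {
  ldim : 'I_n -> nat;
  ledge : forall i : 'I_n,
    {set ('rV[F]_(ldim i) * F * 'rV[F]_(ldim (ordS i)))%type}
}.

Definition ltrellis_trellis (T : ltrellis) : trellis :=
  @Trellis (fun i => 'rV[F]_(ldim T i) : finType) (ledge T).
Coercion ltrellis_trellis : ltrellis >-> trellis.

Definition tcomb (m k : nat) (a : F) (x y : 'rV[F]_m * F * 'rV[F]_k) :=
  (a *: x.1.1 + y.1.1, a * x.1.2 + y.1.2, a *: x.2 + y.2).

Definition is_linear (T : ltrellis) : Prop :=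
  forall i : 'I_n,
    (0, 0, 0) \in ledge T i /\
    forall (a : F) x y, x \in ledge T i -> y \in ledge T i ->
      tcomb (ldim T i) (ldim T (ordS i)) a x y \in ledge T i.

Definition obtained_by_merging (T1 T2 : ltrellis) : Prop :=
  exists phi : forall i : 'I_n, 'rV[F]_(ldim T1 i) -> 'rV[F]_(ldim T2 i),
    [/\ forall i (a : F) x y, phi i (a *: x + y) = a *: phi i x + phi i y,
        forall i y, exists x, phi i x = y &
        forall i, ledge T2 i =
          [set (phi i e.1.1, e.1.2, phi (ordS i) e.2) | e in ledge T1 i]].

End Trellis.
Arguments Trellis {F n}.
Arguments vtx {F n}.
Arguments edge {F n}.
Arguments trim {F n}.
Arguments code {F n}.
Arguments same_code {F n}.
Arguments almost_reduced {F n}.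
Arguments mergeable {F n}.
Arguments smaller {F n}.
Arguments ldim {F n}.
Arguments ledge {F n}.
Arguments is_linear {F n}.
Arguments obtained_by_merging {F n}.

From HB Require Import structures.
From mathcomp Require Import all_boot all_order all_algebra.
From mathcomp Require Import ring.
Import GRing.Theory.
Set Implicit Arguments.
Unset Strict Implicit.
Unset Printing Implicit Defensive.

Local Open Scope ring_scope.

(* To stay linear, merging v and w in V_i must identify every pair of states
   congruent modulo the line through v - w, so T' is the quotient of T by
   that line at V_i; it is smaller since v != w, and C(T) <= C(T').
   Conversely, a cycle of T' lifts to a sequence of edges of T that closes up
   except for a gap a (v - w) at V_i.  If a != 0, scale it by a^-1 and add
   the difference of two cycles of T (which exist by almost reducedness)
   through w and through the rescaled endpoint: the result is a cycle of the
   trellis with v and w merged, hence its label lies in C(T) by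
   mergeability, and by linearity so does the original label. *)

Section LineQuotient.
Variables (F : finFieldType) (m : nat).

(* F^m modulo the line F D, realized by eliminating a coordinate k with
   D_k != 0; the identity when D = 0. *)
Definition lquot_dim (D : 'rV[F]_m) : nat :=
  if [pick k | D ord0 k != 0] is Some _ then m.-1 else m.

Definition lquot (D : 'rV[F]_m) (x : 'rV[F]_m) : 'rV[F]_(lquot_dim D) :=
  match [pick k | D ord0 k != 0] as o
    return 'rV[F]_(if o is Some _ then m.-1 else m) with
  | Some k => col' k (x - (x ord0 k / D ord0 k) *: D)
  | None => x
  end.

Lemma lquotP D (a : F) x y : lquot D (a *: x + y) = a *: lquot D x + lquot D y.
Proof.
rewrite /lquot /lquot_dim; case: pickP => [k _|//].
by apply/rowP => j; rewrite !mxE /=; ring.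
Qed.

Lemma lquot0 D : lquot D 0 = 0.
Proof.
rewrite /lquot /lquot_dim; case: pickP => // k _.
by apply/rowP => j; rewrite !mxE; ring.
Qed.

Lemma lquot_surj D y : exists x, lquot D x = y.
Proof.
move: y; rewrite /lquot /lquot_dim; case: pickP => [k _|_] y; last by exists y.
exists (\row_l (if unlift k l is Some l' then y ord0 l' else 0)).
by apply/rowP => j; rewrite !mxE unlift_none liftK !mul0r subr0.
Qed.

Lemma lquot_eq_scale D x y : lquot D x = lquot D y -> exists a, x - y = a *: D.
Proof.
rewrite /lquot /lquot_dim; case: pickP => [k Dk|_] Exy; last first.
  by exists 0; rewrite scale0r Exy subrr.
exists ((x ord0 k - y ord0 k) / D ord0 k).
apply/rowP => l; rewrite !mxE; case: (unliftP k l) => [l' ->|->]; last first.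
  by rewrite mulfVK.
have := congr1 (fun M : 'rV_ _ => M ord0 l') Exy; rewrite !mxE => Exy'.
rewrite -[x ord0 (lift k l')](subrK (x ord0 k / D ord0 k * D ord0 (lift k l'))).
by rewrite Exy'; ring.
Qed.

Lemma lquot_dim_le D : (lquot_dim D <= m)%N.
Proof. by rewrite /lquot_dim; case: pickP => // k _; apply: leq_pred. Qed.

Lemma lquot_dim_lt D : D != 0 -> (lquot_dim D < m)%N.
Proof.
move=> D_neq0; rewrite /lquot_dim; case: pickP => [k _|D0].
  by case: m k => [[]|].
case/eqP: D_neq0; apply/rowP => j; rewrite mxE.
by have := D0 j; rewrite ord1 => /negbFE/eqP.
Qed.

End LineQuotient.

Lemma tag_map (I : Type) (P Q : I -> Type) (f : forall i, P i -> Q i) i1 i2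
    (a : P i1) (b : P i2) :
  Tagged P a = Tagged P b -> Tagged Q (f i1 a) = Tagged Q (f i2 b).
Proof. exact: congr1 (fun s : {x : I & P x} => Tagged Q (f (tag s) (tagged s))) _ _. Qed.

Lemma card_finField_gt1 (F : finFieldType) : (1 < #|F|)%N.
Proof. by apply/card_gt1P; exists 0, 1; rewrite eq_sym oner_neq0. Qed.

Section LinearTrellis.
Variables (F : finFieldType) (n : nat) (T : ltrellis F n).
Hypothesis T_linear : is_linear T.

Definition labelled_edges
    (e : forall j, ('rV[F]_(ldim T j) * F * 'rV[F]_(ldim T (ordS j)))%type)
    (c : 'rV[F]_n) :=
  forall j, e j \in ledge T j /\ (e j).1.2 = c ord0 j.

Lemma labelled_edges_comb a e1 c1 e2 c2 :
  labelled_edges e1 c1 -> labelled_edges e2 c2 ->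
  labelled_edges (fun j => tcomb _ _ _ a (e1 j) (e2 j)) (a *: c1 + c2).
Proof.
move=> e1c1 e2c2 j; have [e1j l1] := e1c1 j; have [e2j l2] := e2c2 j.
by split; [apply: (T_linear j).2 | rewrite /= !mxE l1 l2].
Qed.

Lemma cycle_labelled_edges u c :
  is_cycle _ _ T u c -> labelled_edges (fun j => (u j, c ord0 j, u (ordS j))) c.
Proof. by move=> uc j; split; first exact: uc. Qed.

Lemma code_closed_edges e c :
  labelled_edges e c -> (forall j, (e j).2 = (e (ordS j)).1.1) -> code T c.
Proof.
move=> ec closed; exists (fun j => (e j).1.1) => j.
have [ej <-] := ec j; rewrite -closed.
by case: (e j) ej => [[]].
Qed.

Lemma code_comb (a : F) c1 c2 : code T c1 -> code T c2 -> code T (a *: c1 + c2).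
Proof.
move=> [u1 u1c1] [u2 u2c2].
have e12 := labelled_edges_comb a (cycle_labelled_edges u1c1)
                                  (cycle_labelled_edges u2c2).
by apply: code_closed_edges e12 _ => j.
Qed.

Hypothesis T_almost_reduced : almost_reduced T.
Variables (j0 : 'I_n) (v w : 'rV[F]_(ldim T (ordS j0))).
Hypothesis merged_sub : forall c,
  merged_code F n T (Tagged (vtx T) v) (Tagged (vtx T) w) c -> code T c.

Lemma code_gap_edges e c a :
  labelled_edges e c -> (forall j, j != j0 -> (e j).2 = (e (ordS j)).1.1) ->
  (e j0).2 - (e (ordS j0)).1.1 = a *: (v - w) -> code T c.
Proof.
move=> ec closed gap; have [a0|a_neq0] := eqVneq a 0.
  apply: code_closed_edges ec _ => j.
  have [->|/closed //] := eqVneq j j0.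
  by apply/eqP; rewrite -subr_eq0 gap a0 scale0r.
set x := a^-1 *: (e (ordS j0)).1.1.
have [ux [cx [uxcx uxx]]] := T_almost_reduced x.
have [uw [cw [uwcw uww]]] := T_almost_reduced w.
pose f j := tcomb _ _ _ a^-1 (e j) (tcomb _ _ _ (-1)
              (ux j, cx ord0 j, ux (ordS j)) (uw j, cw ord0 j, uw (ordS j))).
have fc : labelled_edges f (a^-1 *: c + ((-1) *: cx + cw)).
  by do 2!apply: labelled_edges_comb => //; apply: cycle_labelled_edges.
have f_head : (f j0).2 = v.
  move/eqP: gap; rewrite subr_eq => /eqP gap.
  rewrite /f /tcomb /= gap uxx uww /x.
  by apply/rowP => k; rewrite !mxE; field.
have f_tail : (f (ordS j0)).1.1 = w.
  rewrite /f /tcomb /= uxx uww /x.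
  by apply/rowP => k; rewrite !mxE; field.
have /merged_sub Cf : merged_code F n T (Tagged (vtx T) v) (Tagged (vtx T) w)
                        (a^-1 *: c + ((-1) *: cx + cw)).
  exists f => j; have [fj fjc] := fc j; split => //.
  have [->|/closed ej] := eqVneq j j0; first by rewrite f_head f_tail; right; left.
  by left; rewrite /f /tcomb /= ej.
have -> : c = a *: (a^-1 *: c + ((-1) *: cx + cw)) +
                (a *: cx + ((- a - 1) *: cw + cw)).
  by apply/rowP => k; rewrite !mxE; field.
have Cx : code T cx by exists ux.
have Cw : code T cw by exists uw.
by do !apply: code_comb => //.
Qed.

End LinearTrellis.

Section QuotientTrellis.
Variables (F : finFieldType) (n : nat) (T : ltrellis F n) (i : 'I_n)
  (D : 'rV[F]_(ldim T i)).

Definition vec_at (j : 'I_n) : 'rV[F]_(ldim T j) :=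
  match j =P i with
  | ReflectT e => ecast k 'rV[F]_(ldim T k) (esym e) D
  | ReflectF _ => 0
  end.

Lemma vec_at_id : vec_at i = D.
Proof. by rewrite /vec_at; case: eqP => // e; rewrite (eq_irrelevance e erefl). Qed.

Lemma vec_at_ne j : j != i -> vec_at j = 0.
Proof. by rewrite /vec_at; case: eqP. Qed.

Definition lquot_trellis := @LTrellis F n (fun j => lquot_dim (vec_at j))
  (fun j => [set (lquot (vec_at j) e.1.1, e.1.2, lquot (vec_at (ordS j)) e.2)
            | e in ledge T j]).

Lemma lquot_trellis_linear : is_linear T -> is_linear lquot_trellis.
Proof.
move=> T_linear j; have [E0 Ecomb] := T_linear j; split.
  by apply/imsetP; exists (0, 0, 0) => //=; rewrite !lquot0.
move=> a _ _ /imsetP[x Ex ->] /imsetP[y Ey ->]; apply/imsetP.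
by exists (tcomb _ _ _ a x y); [apply: Ecomb | rewrite /tcomb /= !lquotP].
Qed.

Lemma lquot_trellis_trim : trim T -> trim lquot_trellis.
Proof.
move=> T_trim j y; have [x <-] := lquot_surj y.
have [[e [Ee ex]] [j' [e' [Ee' e'x]]]] := T_trim j x; split.
  exists (lquot (vec_at j) e.1.1, e.1.2, lquot (vec_at (ordS j)) e.2).
  by split; [apply/imsetP; exists e | rewrite /= ex].
exists j', (lquot (vec_at j') e'.1.1, e'.1.2, lquot (vec_at (ordS j')) e'.2).
split; first by apply/imsetP; exists e'.
exact: (tag_map (fun k => lquot (vec_at k)) e'x).
Qed.

Lemma lquot_trellis_merging : obtained_by_merging T lquot_trellis.
Proof.
exists (fun j => lquot (vec_at j)); split => // j.
- exact: lquotP.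
- exact: lquot_surj.
Qed.

Lemma lquot_trellis_smaller : D != 0 -> smaller lquot_trellis T.
Proof.
move=> D_neq0; split=> [j|]; last exists i;
  rewrite /= !card_mx !mul1n ?leq_exp2l ?ltn_exp2l ?card_finField_gt1 //.
- exact: lquot_dim_le.
- by rewrite vec_at_id; apply: lquot_dim_lt.
Qed.

Lemma code_lquot_trellis c : code T c -> code lquot_trellis c.
Proof.
case=> u uc; exists (fun j => lquot (vec_at j) (u j)) => j; apply/imsetP.
by exists (u j, c ord0 j, u (ordS j)); first exact: uc.
Qed.

Lemma lquot_trellis_lift c : code lquot_trellis c ->
  exists e, labelled_edges e c /\
    forall j, exists a, (e j).2 - (e (ordS j)).1.1 = a *: vec_at (ordS j).
Proof.
case=> u uc.
have lift j : exists e, (e \in ledge T j) &&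
    ((lquot (vec_at j) e.1.1, e.1.2, lquot (vec_at (ordS j)) e.2)
       == (u j, c ord0 j, u (ordS j))).
  by have /imsetP[e Ee E] := uc j; exists e; rewrite Ee E eqxx.
pose e j := xchoose (lift j).
have ejP j := andP (xchooseP (lift j)).
exists e; split=> [j | j].
  by have [Eej /eqP[_ ejc _]] := ejP j.
apply: lquot_eq_scale.
by have [_ /eqP[_ _ ->]] := ejP j; have [_ /eqP[-> _ _]] := ejP (ordS j).
Qed.

End QuotientTrellis.

Theorem mainTheorem12 (F : finFieldType) (n : nat) (T : ltrellis F n) :
  (0 < n)%N ->
  trim T -> is_linear T -> almost_reduced T ->
  mergeable T ->
  exists T' : ltrellis F n,
    [/\ is_linear T', trim T', obtained_by_merging T T',
        same_code T' T & smaller T' T].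
Proof.
move=> _ T_trim T_linear T_ar [i [v [w [v_neq_w merged_eq]]]].
have [j0 Ei] : exists j0, i = ordS j0 by exists (ord_pred i); rewrite ord_predK.
subst i.
pose D : 'rV[F]_(ldim T (ordS j0)) := v - w.
have D_neq0 : D != 0 by rewrite subr_eq0; apply/eqP.
exists (lquot_trellis D); split.
- exact: lquot_trellis_linear.
- exact: lquot_trellis_trim.
- exact: lquot_trellis_merging.
- move=> c; split; last exact: code_lquot_trellis.
  case/lquot_trellis_lift => e [ec gaps].
  have [a gap] := gaps j0; rewrite vec_at_id in gap.
  apply: (code_gap_edges T_linear T_ar _ ec _ gap) => [c' | j j_neq_j0].
    by case: (merged_eq c').
  have [b gap_j] := gaps j.
  rewrite vec_at_ne ?scaler0 in gap_j; first by apply/eqP; rewrite -subr_eq0 gap_j.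
  by rewrite (inj_eq (@ordS_inj n)).
- exact: lquot_trellis_smaller.
Qed.
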